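(* Let $Q$ be a connected non-Abelian complex algebraic group with Lie algebra $\mathfrak q$, and let $\mathfrak l\subset\mathfrak q$ be a Lie subalgebra. If $A\subset\mathcal S(\mathfrak q)^{\mathfrak l}$ is a Poisson-commutative subalgebra, then $$\mathrm{tr.deg}\,A\le\tfrac12(\dim\mathfrak q-\mathrm{ind}\,\mathfrak q-\dim\mathfrak l+\mathrm{ind}\,\mathfrak l)+\mathrm{ind}\,\mathfrak q=\mathbf b(\mathfrak q)-\mathbf b(\mathfrak l)+\mathrm{ind}\,\mathfrak l.$$
   Context: $\mathcal S(\mathfrak q)\cong\mathbb C[\mathfrak q^*]$ with the Lie–Poisson bracket. $\mathcal S(\mathfrak q)^{\mathfrak l}=\{F\in\mathcal S(\mathfrak q):\{\xi,F\}=0\ \forall \xi\in\mathfrak l\}$. For a Lie algebra $\mathfrak a$, $\mathrm{ind}\,\mathfrak a=\min_{\gamma\in\mathfrak a^*}\dim\mathfrak a_\gamma$, where $\mathfrak a_\gamma$ is the coadjoint stabiliser of $\gamma$, and $\mathbf b(\mathfrak a)=(\dim\mathfrak a+\mathrm{ind}\,\mathfrak a)/2$. *)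

From mathcomp Require Import all_boot all_algebra.
From mathcomp Require Import Rstruct.
From mathcomp Require realfun.
From mathcomp Require Import complex mpoly.
Set Implicit Arguments. Unset Strict Implicit. Unset Printing Implicit Defensive.
Import GRing.Theory.
Local Open Scope ring_scope.

Definition CC : fieldType := (Rdefinitions.R)[i].

(* A Lie algebra q of dimension n over C: underlying space C^n = 'rV[CC]_n with
   standard basis e_i = delta_mx 0 i, and bracket given by structure constants
   c i j = [e_i, e_j], extended bilinearly. *)
Definition lie_br (n : nat) (c : 'I_n -> 'I_n -> 'rV[CC]_n)
  (x y : 'rV[CC]_n) : 'rV[CC]_n :=
  \sum_(i < n) \sum_(j < n) (x 0 i * y 0 j) *: c i j.

Definition is_lie_algebra (n : nat) (c : 'I_n -> 'I_n -> 'rV[CC]_n) : Prop :=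
  (forall x, lie_br c x x = 0) /\
  (forall x y z, lie_br c x (lie_br c y z) + lie_br c y (lie_br c z x)
                 + lie_br c z (lie_br c x y) = 0).

Definition non_abelian (n : nat) (c : 'I_n -> 'I_n -> 'rV[CC]_n) : Prop :=
  exists x y, lie_br c x y != 0.

(* A Lie subalgebra l of q, given as the row space of a square matrix L. *)
Definition lie_subalgebra (n : nat) (c : 'I_n -> 'I_n -> 'rV[CC]_n)
  (L : 'M[CC]_n) : Prop :=
  forall x y, (x <= L)%MS -> (y <= L)%MS -> (lie_br c x y <= L)%MS.

(* A linear form gamma on q is a column vector: gamma(x) = (x *m gamma) 0 0.
   Restrictions of such forms to l give all of l^*. *)
Definition gram (n : nat) (c : 'I_n -> 'I_n -> 'rV[CC]_n) (gamma : 'cV[CC]_n)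
  : 'M[CC]_n :=
  \matrix_(i, j) (lie_br c (delta_mx 0 i) (delta_mx 0 j) *m gamma) 0 0.

(* Coadjoint stabiliser of gamma|_l in l:
   l_gamma = { x in l | gamma([x, y]) = 0 for all y in l }
           = l ∩ { x | x *m gram *m L^T = 0 }. *)
Definition coad_stab (n : nat) (c : 'I_n -> 'I_n -> 'rV[CC]_n)
  (L : 'M[CC]_n) (gamma : 'cV[CC]_n) : 'M[CC]_n :=
  (L :&: kermx (gram c gamma *m L^T))%MS.

Definition is_index (n : nat) (c : 'I_n -> 'I_n -> 'rV[CC]_n)
  (L : 'M[CC]_n) (k : nat) : Prop :=
  (exists gamma, \rank (coad_stab c L gamma) = k) /\
  (forall gamma, (k <= \rank (coad_stab c L gamma))%N).

Definition bnum (d i : nat) : rat := (d%:R + i%:R) / 2.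

(* S(q) = C[q^*] = {mpoly CC[n]}; the element x of q is the linear polynomial
   sum_i x_i X_i. *)
Definition lin (n : nat) (x : 'rV[CC]_n) : {mpoly CC[n]} :=
  \sum_(i < n) x 0 i *: 'X_i.

Definition pbr (n : nat) (c : 'I_n -> 'I_n -> 'rV[CC]_n)
  (F G : {mpoly CC[n]}) : {mpoly CC[n]} :=
  \sum_(i < n) \sum_(j < n) lin (c i j) * (mderiv i F) * (mderiv j G).

Definition l_invariant (n : nat) (c : 'I_n -> 'I_n -> 'rV[CC]_n)
  (L : 'M[CC]_n) (F : {mpoly CC[n]}) : Prop :=
  forall xi, (xi <= L)%MS -> pbr c (lin xi) F = 0.

Definition is_subalgebra (n : nat) (A : {pred {mpoly CC[n]}}) : Prop :=
  [/\ 1 \in A,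
      forall F G, F \in A -> G \in A -> F + G \in A,
      forall F G, F \in A -> G \in A -> F * G \in A &
      forall (a : CC) F, F \in A -> a *: F \in A].

Definition alg_indep (n k : nat) (f : 'I_k -> {mpoly CC[n]}) : Prop :=
  forall P : {mpoly CC[k]}, comp_mpoly [tuple f i | i < k] P = 0 -> P = 0.

From mathcomp Require Import all_boot all_algebra.
From mathcomp Require Import Rstruct.
From mathcomp Require Import complex mpoly.
From mathcomp Require Import zify ring lra.
From Stdlib Require Import Classical.
Set Implicit Arguments. Unset Strict Implicit. Unset Printing Implicit Defensive.
Import GRing.Theory Num.Theory.
Local Open Scope ring_scope.

(* For gamma in q^*, let B_gamma(x, y) = gamma([x, y]); the Poisson bracket of
   F and G at gamma is B_gamma(dF, dG). By the Jacobian criterion, at a generic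
   gamma the differentials of algebraically independent f_1, ..., f_k in A span
   a k-dimensional subspace V of q; Poisson-commutativity makes V isotropic for
   B_gamma and l-invariance makes V orthogonal to l. At a generic gamma the form
   B_gamma has rank at least dim q - ind q, and its restriction to l has rank at
   least dim l - ind l. Since B_gamma has the same rank on V + l as on l, a rank
   count gives 2k + dim l <= dim q + ind q + ind l. *)

(** * Linear algebra *)

Lemma row_free_col_mxl (F : fieldType) m1 m2 n (A : 'M[F]_(m1, n)) (B : 'M_(m2, n)) :
  row_free (col_mx A B) -> row_free A.
Proof.
rewrite /row_free -addsmxE => /eqP rk_AB.
have [le_AB _] := mxrank_adds_leqif A B.
by rewrite eqn_leq rank_leq_row /=; have := rank_leq_row B; lia.
Qed.

Lemma mulmx_trmx_entry (R : nzRingType) m1 m2 n (A : 'M[R]_(m1, n)) (M : 'M_n)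
    (C : 'M_(m2, n)) a b :
  (A *m M *m C^T) a b = (row a A *m M *m (row b C)^T) 0 0.
Proof. by rewrite -row_mul !mxE; apply: eq_bigr => l _; rewrite !mxE. Qed.

Lemma mxrank_congruence_ge (F : fieldType) m n (B : 'M[F]_n) (U : 'M_(m, n)) :
  (2 * \rank U + \rank B <= \rank (U *m B *m U^T) + 2 * n)%N.
Proof.
by have := mxrank_mul_min (U *m B) U^T; have := mxrank_mul_min U B; rewrite mxrank_tr; lia.
Qed.

(* Since [V] is isotropic and [B]-orthogonal to [L], the form [B] has the same
   rank on [V + L] as on [L]. *)
Lemma isotropic_rank_bound (F : fieldType) n k m iq il (B : 'M[F]_n)
    (V : 'M_(k, n)) (L : 'M_(m, n)) :
  B^T = - B -> V *m B *m V^T = 0 -> L *m B *m V^T = 0 ->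
  (n <= \rank B + iq)%N -> (\rank L <= \rank (L *m B *m L^T) + il)%N ->
  (2 * \rank V + \rank L <= n + iq + il)%N.
Proof.
move=> B_skew VBV LBV rkB rkL.
have VBL : V *m B *m L^T = 0.
  apply: trmx_inj; rewrite !trmx_mul trmxK B_skew mulNmx mulmxN mulmxA LBV.
  by rewrite oppr0 trmx0.
have rkU : \rank (col_mx V L *m B *m (col_mx V L)^T) = \rank (L *m B *m L^T).
  rewrite tr_col_mx mul_col_mx mul_col_row VBV VBL LBV.
  by rewrite rank_diag_block_mx mxrank0.
have rk_sum : (\rank (col_mx V L) + \rank (V :&: L) = \rank V + \rank L)%N.
  by rewrite -addsmxE mxrank_sum_cap.
have rk_cap : (\rank (V :&: L) + \rank (L *m B *m L^T) <= \rank L)%N.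
  rewrite -(mxrank_mul_ker L (B *m L^T)) mulmxA addnC leq_add2l mxrankS //.
  rewrite sub_capmx capmxSr; have /submxP [X ->] := capmxSl V L.
  by apply/sub_kermxP; rewrite -mulmxA (mulmxA V) VBL mulmx0.
by have := mxrank_congruence_ge B (col_mx V L); rewrite rkU; lia.
Qed.

(** * Generic points of affine space *)

Lemma base_digits_inj n D (f g : 'I_n -> nat) :
  (forall i, f i < D)%N -> (forall i, g i < D)%N ->
  (\sum_i f i * D ^ i = \sum_i g i * D ^ i)%N -> f =1 g.
Proof.
elim: n f g => [|n IHn] f g f_lt g_lt; first by move=> _ [].
have shift (h : 'I_n.+1 -> nat) : (\sum_i h i * D ^ i =
    h ord0 + D * \sum_(i < n) h (lift ord0 i) * D ^ i)%N.
  rewrite big_ord_recl expn0 muln1 big_distrr; congr (_ + _)%N.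
  by apply: eq_bigr => i _; rewrite /= /bump /= expnS mulnCA.
rewrite !shift => eq_sum.
have D_gt0 : (0 < D)%N by have := f_lt ord0; lia.
have eq0 : f ord0 = g ord0.
  have := congr1 (modn^~ D) eq_sum.
  by rewrite !(addnC (_ ord0)) !(mulnC D) !modnMDl !modn_small.
have eq_tail := congr1 (divn^~ D) eq_sum.
rewrite !(addnC (_ ord0)) !(mulnC D) !divnMDl // !divn_small // !addn0 in eq_tail.
have eq_lift := IHn _ _ (fun i => f_lt (lift ord0 i)) (fun i => g_lt (lift ord0 i)) eq_tail.
by move=> i; case: (unliftP ord0 i) => [j ->|->]; [apply: eq_lift | apply: eq0].
Qed.

Lemma mnm_le_mdeg n (m : 'X_{1..n}) i : (m i <= mdeg m)%N.
Proof. by rewrite mdegE (bigD1 i) //= leq_addr. Qed.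

Section GenericPoints.
Variable R : fieldType.
Hypothesis R_char0 : [pchar R] =i pred0.

Lemma natr_inj_char0 : injective (fun m : nat => m%:R : R).
Proof.
have natr_eq0 := (pcharf0P R).1 R_char0.
move=> a b /= eq_ab; wlog le_ab : a b eq_ab / (a <= b)%N.
  by move=> wlog_ab; case: (leqP a b) => [|/ltnW] /wlog_ab ->.
apply/eqP; rewrite eqn_leq le_ab /= -subn_eq0 -natr_eq0 natrB //.
by rewrite eq_ab subrr.
Qed.

Lemma poly_exists_nonroot (Q : {poly R}) : Q != 0 -> exists t, ~~ root Q t.
Proof.
move=> Q_neq0; pose ts := [seq (i%:R : R) | i <- iota 0 (size Q)].
have [all_roots|/allPn [t _ Qt]] := boolP (all (root Q) ts); last by exists t.
have := max_poly_roots Q_neq0 all_roots.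
rewrite size_map size_iota ltnn map_inj_uniq ?iota_uniq //; last exact: natr_inj_char0.
by move/(_ isT).
Qed.

Variable n : nat.

(* Kronecker substitution [X_i |-> t ^+ D ^ i], with [D] larger than every
   exponent, sends distinct monomials of [P] to distinct powers of [t]. *)
Lemma mpoly_exists_nonroot (P : {mpoly R[n]}) : P != 0 -> exists v, P.@[v] != 0.
Proof.
move=> P_neq0; set D := msize P.
pose e (m : 'X_{1..n}) := (\sum_i m i * D ^ i)%N.
have e_inj : {in msupp P &, injective e}.
  have lt_D m : m \in msupp P -> forall i, (m i < D)%N.
    by move=> /msize_mdeg_lt m_lt i; apply: leq_ltn_trans (mnm_le_mdeg m i) m_lt.
  move=> m m' mP m'P eq_e; apply/mnmP.
  exact: base_digits_inj (lt_D _ mP) (lt_D _ m'P) eq_e.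
pose Q : {poly R} := \sum_(m <- msupp P) P@_m *: 'X^(e m).
have Q_eval t : Q.[t] = P.@[fun i => t ^+ (D ^ i)].
  rewrite mevalE horner_sum; apply: eq_bigr => m _.
  rewrite hornerZ hornerXn (big_morph _ (exprD t) (expr0 t)).
  by congr (_ * _); apply: eq_bigr => i _; rewrite mulnC exprM.
have Q_neq0 : Q != 0.
  have m0P := mlead_supp P_neq0; set m0 := mlead P in m0P.
  apply/eqP => /(congr1 (fun q : {poly R} => q`_(e m0))).
  rewrite coef0 /Q coef_sum (bigD1_seq m0) ?msupp_uniq //= coefZ coefXn eqxx mulr1.
  rewrite big1 ?addr0 => [P_m0|m ne_m]; first by move: m0P; rewrite mcoeff_msupp P_m0 eqxx.
  rewrite coefZ coefXn; have [mP|mNP] := boolP (m \in msupp P).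
    by rewrite (inj_in_eq e_inj) // eq_sym (negbTE ne_m) mulr0.
  by rewrite memN_msupp_eq0 ?mul0r.
have [t Qt] := poly_exists_nonroot Q_neq0.
by exists (fun i => t ^+ (D ^ i)); rewrite -Q_eval.
Qed.

Definition generically (P : ('I_n -> R) -> Prop) :=
  exists2 Q : {mpoly R[n]}, Q != 0 & forall v, Q.@[v] != 0 -> P v.

Lemma generically_exists P : generically P -> exists v, P v.
Proof. by case=> Q /mpoly_exists_nonroot [v Qv] QP; exists v; apply: QP. Qed.

Lemma generically_and P1 P2 :
  generically P1 -> generically P2 -> generically (fun v => P1 v /\ P2 v).
Proof.
case=> [Q1 Q1_neq0 Q1P] [Q2 Q2_neq0 Q2P]; exists (Q1 * Q2); first by rewrite mulf_neq0.
by move=> v; rewrite mevalM mulf_eq0 negb_or => /andP[/Q1P ? /Q2P ?].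
Qed.

Lemma generically_all (I : eqType) (s : seq I) (P : I -> ('I_n -> R) -> Prop) :
  (forall i, generically (P i)) -> generically (fun v => forall i, i \in s -> P i v).
Proof.
move=> genP; elim: s => [|i s IHs]; first by exists 1; rewrite ?oner_eq0.
have [Q Q_neq0 QP] := generically_and (genP i) IHs.
by exists Q => // v /QP [Piv Psv] j; rewrite inE => /predU1P [->|/Psv].
Qed.

End GenericPoints.

Lemma generically_rank_ge (R : fieldType) n m1 m2 (G : 'M[{mpoly R[n]}]_(m1, m2)) v0 :
  generically (fun v => \rank (map_mx (meval v0) G) <= \rank (map_mx (meval v) G))%N.
Proof.
set A := map_mx (meval v0) G; set r := \rank A.
pose S : 'M[R]_(r, m1) := pid_mx r *m invmx (col_ebase A).
pose T : 'M[R]_(m2, r) := invmx (row_ebase A) *m pid_mx r.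
have SAT : S *m A *m T = 1%:M.
  rewrite -[A in S *m A](mulmx_ebase A) !mulmxA -(mulmxA (pid_mx r)) mulVmx ?col_ebase_unit //.
  rewrite mulmx1 -(mulmxA _ (row_ebase A)) mulmxV ?row_ebase_unit // mulmx1.
  by rewrite pid_mx_id ?rank_leq_row // pid_mx_id ?rank_leq_col // pid_mx_1.
have meval_C v m m' (M : 'M[R]_(m, m')) : map_mx (meval v) (map_mx (@mpolyC n R) M) = M.
  by apply/matrixP => a b; rewrite !mxE mevalC.
pose minor := \det (map_mx (@mpolyC n R) S *m G *m map_mx (@mpolyC n R) T).
have minor_eval v : minor.@[v] = \det (S *m map_mx (meval v) G *m T).
  by rewrite -det_map_mx !map_mxM !meval_C.
exists minor => [|v minor_v].
  by apply: contra_neq (oner_neq0 R) => minor0; rewrite -(det1 R r) -SAT -minor_eval minor0 meval0.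
have SGT_unit : S *m map_mx (meval v) G *m T \in unitmx by rewrite unitmxE unitfE -minor_eval.
rewrite -[r](mxrank_unit SGT_unit).
by apply: leq_trans (mxrankM_maxl _ _) _; apply: mxrankM_maxr.
Qed.

(** * Derivatives of composed polynomials *)

Lemma mderivXU (R : nzRingType) n (i j : 'I_n) :
  mderiv i ('X_j : {mpoly R[n]}) = ((j == i)%:R)%:MP.
Proof.
rewrite mderivX mnm1E; case: eqP => [->|_]; last by rewrite scale0r mpolyC0.
rewrite (_ : U_(i) - U_(i) = 0)%MM ?mpolyX0 ?scale1r ?mpolyC1 //.
by apply/mnmP => l; rewrite mnmBE mnm0E subnn.
Qed.

Section ChainRule.
Variables (R : comNzRingType) (n k : nat) (lq : n.-tuple {mpoly R[k]}).

Definition satisfies_chain_rule (P : {mpoly R[n]}) :=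
  forall i, mderiv i (P \mPo lq) = \sum_j (mderiv j P \mPo lq) * mderiv i (tnth lq j).

Lemma chain_ruleD P Q :
  satisfies_chain_rule P -> satisfies_chain_rule Q -> satisfies_chain_rule (P + Q).
Proof.
move=> dP dQ i; rewrite comp_mpolyD mderivD dP dQ -big_split /=.
by apply: eq_bigr => j _; rewrite mderivD comp_mpolyD mulrDl.
Qed.

Lemma chain_ruleZ c P : satisfies_chain_rule P -> satisfies_chain_rule (c *: P).
Proof.
move=> dP i; rewrite comp_mpolyZ mderivZ dP scaler_sumr.
by apply: eq_bigr => j _; rewrite mderivZ comp_mpolyZ scalerAl.
Qed.

Lemma chain_ruleM P Q :
  satisfies_chain_rule P -> satisfies_chain_rule Q -> satisfies_chain_rule (P * Q).
Proof.
move=> dP dQ i; rewrite !rmorphM mderivM dP dQ big_distrl big_distrr -big_split /=.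
by apply: eq_bigr => j _; rewrite mderivM rmorphD !rmorphM /=; ring.
Qed.

Lemma chain_rule1 : satisfies_chain_rule 1.
Proof.
move=> i; rewrite comp_mpoly1 -mpolyC1 mderivC big1 // => j _.
by rewrite mderivC comp_mpolyC mpolyC0 mul0r.
Qed.

Lemma chain_ruleX j : satisfies_chain_rule 'X_j.
Proof.
move=> i; rewrite comp_mpolyXU -tnth_nth (bigD1 j) //= big1 ?addr0 => [|l /negbTE ne_lj].
  by rewrite mderivXU eqxx comp_mpolyC mpolyC1 mul1r.
by rewrite mderivXU eq_sym ne_lj comp_mpolyC mpolyC0 mul0r.
Qed.

Lemma mderiv_comp P i :
  mderiv i (P \mPo lq) = \sum_j (mderiv j P \mPo lq) * mderiv i (tnth lq j).
Proof.
elim/mpolyind: P i => [i|c m P _ _ dP].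
  by rewrite !raddf0 big1 // => j _; rewrite !raddf0 mul0r.
apply: chain_ruleD dP; apply: chain_ruleZ; rewrite mpolyXE_id.
apply: big_ind => [|Q1 Q2|j _]; [exact: chain_rule1 | exact: chain_ruleM |].
elim: (m j) => [|e IHe]; first by rewrite expr0; apply: chain_rule1.
by rewrite exprS; apply: chain_ruleM (chain_ruleX j) IHe.
Qed.

End ChainRule.

Lemma comp_mpolyA (R : comNzRingType) n k l (P : {mpoly R[n]})
    (t : n.-tuple {mpoly R[k]}) (g : k.-tuple {mpoly R[l]}) :
  (P \mPo t) \mPo g = P \mPo [tuple tnth t i \mPo g | i < n].
Proof.
rewrite [P \mPo t]comp_mpolyEX [RHS]comp_mpolyEX raddf_sum; apply: eq_bigr => m _.
rewrite /= comp_mpolyZ !comp_mpolyX rmorph_prod; congr (_ *: _); apply: eq_bigr => i _.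
by rewrite rmorphXn tnth_mktuple.
Qed.

Section VanishingDerivative.
Variables (R : fieldType) (n : nat).
Hypothesis R_char0 : [pchar R] =i pred0.

Lemma mderiv_eq0_msupp (P : {mpoly R[n]}) j m :
  mderiv j P = 0 -> m \in msupp P -> m j = 0%N.
Proof.
move=> dP mP; apply/eqP; apply: contraTT mP => mj_neq0.
have le_jm : (U_(j) <= m)%MM by rewrite lep1mP.
have := congr1 (mcoeff (m - U_(j))%MM) dP.
rewrite mcoeff_mderiv submK // mcoeff0 -mulr_natr => /eqP.
rewrite mulf_eq0 ((pcharf0P R).1 R_char0) /= orbF => /eqP P_m.
by rewrite mcoeff_msupp P_m eqxx.
Qed.

Lemma comp_mpoly_mderiv_eq0 k (P : {mpoly R[n]}) j (h h' : n.-tuple {mpoly R[k]}) :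
  mderiv j P = 0 -> (forall i, i != j -> tnth h i = tnth h' i) -> P \mPo h = P \mPo h'.
Proof.
move=> dP eq_h; rewrite !comp_mpolyE; apply: eq_big_seq => m mP; congr (_ *: _).
apply: eq_bigr => i _; have [->|ne_ij] := eqVneq i j; last by rewrite eq_h.
by rewrite (mderiv_eq0_msupp dP mP) !expr0.
Qed.

End VanishingDerivative.

(** * Algebraic independence and the Jacobian criterion *)

(* [alg_indep] is the instance [R := CC]. *)
Definition mpoly_alg_indep (R : nzRingType) n p (g : 'I_p -> {mpoly R[n]}) :=
  forall P : {mpoly R[p]}, P \mPo [tuple g a | a < p] = 0 -> P = 0.

Section MsizeBounds.
Variables (R : idomainType) (n : nat).
Implicit Types P Q : {mpoly R[n]}.

Lemma msizeM_leq P Q : (msize (P * Q) <= (msize P + msize Q).-1)%N.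
Proof.
have [->|P_neq0] := eqVneq P 0; first by rewrite mul0r msize0.
have [->|Q_neq0] := eqVneq Q 0; first by rewrite mulr0 msize0.
by rewrite msizeM.
Qed.

Lemma msize_exp_leq Q e : (msize (Q ^+ e) <= (e * msize Q).+1)%N.
Proof.
elim: e => [|e IHe]; first by rewrite expr0 msize1.
by rewrite exprS; apply: leq_trans (msizeM_leq _ _) _; lia.
Qed.

Lemma msize_comp_mpolyX k (m : 'X_{1..k}) (lq : k.-tuple {mpoly R[n]}) :
  (msize ('X_[m] \mPo lq) <= (\sum_i m i * msize (tnth lq i)).+1)%N.
Proof.
rewrite comp_mpolyX; apply: (big_ind2 (fun P s => msize P <= s.+1)%N).
- by rewrite msize1.
- by move=> P1 s1 P2 s2 le1 le2; apply: leq_trans (msizeM_leq _ _) _; lia.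
- by move=> i _; apply: msize_exp_leq.
Qed.

End MsizeBounds.

Lemma msize_mderiv_lt (R : nzRingType) n (P : {mpoly R[n]}) j :
  P != 0 -> (msize (mderiv j P) < msize P)%N.
Proof.
move=> P_neq0; have P_gt0 : (0 < msize P)%N by rewrite lt0n msize_poly_eq0.
rewrite msizeE -(prednK P_gt0) ltnS; apply/bigmax_leqP_seq => m mP _.
have : P@_(m + U_(j)) != 0.
  by move: mP; rewrite mcoeff_msupp mcoeff_mderiv; apply: contraNneq => ->; rewrite mul0rn.
rewrite -mcoeff_msupp => /msize_mdeg_lt; rewrite mdegD mdeg1 addn1.
by rewrite -(prednK P_gt0) ltnS.
Qed.

Lemma exponent_count_lt n p d E :
  (n < p)%N -> ((p * d.+2) ^ n < E)%N -> ((p * (E * d).+1).+1 ^ n < E ^ p)%N.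
Proof.
move=> lt_np lt_E; have le_N : ((p * (E * d).+1).+1 <= p * d.+2 * E)%N by nia.
have le_pow e : ((p * (E * d).+1).+1 ^ e <= (p * d.+2 * E) ^ e)%N.
  by elim: e => // e IHe; rewrite !expnS leq_mul.
apply: leq_ltn_trans (le_pow n) _; rewrite expnMn.
apply: (@leq_trans (E ^ n.+1)); last by apply: leq_pexp2l; lia.
by rewrite expnS ltn_pmul2r // expn_gt0; lia.
Qed.

Section Counting.
Variables (R : fieldType) (n p : nat) (g : 'I_p -> {mpoly R[n]}).

(* If [p > n], the [E ^ p] monomials in [p] variables with exponents [< E] are
   mapped by [X_a |-> g a] into the span of the [N ^ n] monomials in [n]
   variables with exponents [< N]; for [E] large this forces a relation. *)
Lemma alg_indep_leq : mpoly_alg_indep g -> (p <= n)%N.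
Proof.
move=> g_indep; rewrite leqNgt; apply/negP => lt_np.
pose G := [tuple g a | a < p]; pose d := (\max_a msize (g a))%N.
pose E := ((p * d.+2) ^ n).+1; pose N := (p * (E * d).+1).+1.
pose I := {ffun 'I_p -> 'I_E}; pose J := {ffun 'I_n -> 'I_N}.
pose monI (phi : I) : 'X_{1..p} := [multinom (phi a : nat) | a < p].
pose monJ (psi : J) : 'X_{1..n} := [multinom (psi i : nat) | i < n].
have monI_inj : injective monI.
  move=> phi phi' /mnmP eq_phi; apply/ffunP => a; apply/val_inj.
  by have := eq_phi a; rewrite !mnmE.
have supp_small phi u : u \in msupp ('X_[monI phi] \mPo G) -> exists psi, u = monJ psi.
  move=> /msize_mdeg_lt lt_u; have lt_N i : (u i < N)%N.
    apply: leq_ltn_trans (mnm_le_mdeg u i) (leq_trans lt_u _).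
    apply: leq_trans (msize_comp_mpolyX _ _) _; rewrite ltnS.
    apply: (@leq_trans (\sum_(a < p) (E * d).+1)); last by rewrite sum_nat_const card_ord.
    apply: leq_sum => a _; rewrite mnmE tnth_mktuple.
    exact: leq_trans (leq_mul (ltnW (ltn_ord _)) (leq_bigmax a)) (leqnSn _).
  by exists [ffun i => Ordinal (lt_N i)]; apply/mnmP => i; rewrite mnmE ffunE.
pose M := \matrix_(r < #|I|, s < #|J|)
  ('X_[monI (enum_val r)] \mPo G)@_(monJ (enum_val s)).
have [w /sub_kermxP wM w_neq0] : exists2 w : 'rV_#|I|, (w <= kermx M)%MS & w != 0.
  apply/rowV0Pn; rewrite kermx_eq0 /row_free neq_ltn; apply/orP; left.
  apply: leq_ltn_trans (rank_leq_col M) _; rewrite !card_ffun !card_ord.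
  exact: exponent_count_lt.
pose P := \sum_r w 0 r *: 'X_[monI (enum_val r)].
have [r0 w_r0] := rV0Pn _ w_neq0.
have P_r0 : P@_(monI (enum_val r0)) = w 0 r0.
  rewrite raddf_sum (bigD1 r0) //= mcoeffZ mcoeffX eqxx mulr1 big1 ?addr0 // => r ne_r.
  by rewrite mcoeffZ mcoeffX (inj_eq monI_inj) (inj_eq enum_val_inj) (negbTE ne_r) mulr0.
suff P_comp : P \mPo G = 0 by move: w_r0; rewrite -P_r0 (g_indep P P_comp) mcoeff0 eqxx.
apply/mpolyP => u; rewrite mcoeff0 /P (raddf_sum (comp_mpoly G)) (raddf_sum (mcoeff u)) /=.
under eq_bigr do rewrite comp_mpolyZ mcoeffZ.
have [/existsP [psi /eqP ->]|no_psi] := boolP [exists psi : J, u == monJ psi].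
  transitivity ((w *m M) 0 (enum_rank psi)); last by rewrite wM mxE.
  by rewrite mxE; apply: eq_bigr => r _; rewrite mxE enum_rankK.
apply: big1 => r _; rewrite memN_msupp_eq0 ?mulr0 //.
by apply: contraNN no_psi => /supp_small [psi ->]; apply/existsP; exists psi.
Qed.

End Counting.

Definition snoc T p (g : 'I_p -> T) (x : T) (a : 'I_(p + 1)) : T :=
  if split a is inl b then g b else x.

Lemma snoc_lshift T p (g : 'I_p -> T) x b : snoc g x (lshift 1 b) = g b.
Proof. by rewrite /snoc (unsplitK (inl b)). Qed.

Lemma snoc_last T p (g : 'I_p -> T) x : snoc g x (rshift p ord0) = x.
Proof. by rewrite /snoc (unsplitK (inr ord0)). Qed.

Lemma lshift_of_neq_last p (a : 'I_(p + 1)) :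
  a != rshift p ord0 -> exists b, a = lshift 1 b.
Proof.
rewrite -(splitK a); case: (split a) => [b|c] /=; first by exists b.
by rewrite (ord1 c) eqxx.
Qed.

Section Jacobian.
Variables (R : fieldType) (n : nat).
Hypothesis R_char0 : [pchar R] =i pred0.

Definition grad (F : {mpoly R[n]}) (v : 'I_n -> R) : 'rV[R]_n :=
  \row_i (mderiv i F).@[v].

Definition jacobian_mx p (g : 'I_p -> {mpoly R[n]}) v : 'M[R]_(p, n) :=
  \matrix_(a < p) grad (g a) v.

Lemma grad_X i v : grad 'X_i v = delta_mx 0 i.
Proof. by apply/rowP => l; rewrite !mxE mderivXU mevalC eq_sym. Qed.

Lemma jacobian_snoc p (g : 'I_p -> {mpoly R[n]}) F v :
  jacobian_mx (snoc g F) v = col_mx (jacobian_mx g v) (grad F v).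
Proof.
apply/row_matrixP => a; rewrite rowK -(splitK a); case: (split a) => [b|c] /=.
  by rewrite rowKu rowK snoc_lshift.
by rewrite rowKd (ord1 c) row_id -/(rshift p ord0) snoc_last.
Qed.

Section AdjoinVariable.
Variables (p : nat) (g : 'I_p -> {mpoly R[n]}) (i : 'I_n).
Hypothesis g_indep : mpoly_alg_indep g.

Local Notation h := [tuple snoc g 'X_i a | a < p + 1].
Local Notation last_var := (rshift p ord0).

(* A relation not involving the last variable is a relation among the [g b]. *)
Lemma relation_mderiv_last_neq0 (P : {mpoly R[p + 1]}) :
  P != 0 -> P \mPo h = 0 -> mderiv last_var P != 0.
Proof.
move=> P_neq0 P_rel; apply: contra_neq P_neq0 => dP.
pose t := [tuple snoc (fun b => 'X_b) 0 a | a < p + 1] : (p + 1).-tuple {mpoly R[p]}.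
pose s := [tuple 'X_(lshift 1 b) | b < p] : p.-tuple {mpoly R[p + 1]}.
have Pt_rel : (P \mPo t) \mPo [tuple g b | b < p] = 0.
  rewrite comp_mpolyA -P_rel; apply: (comp_mpoly_mderiv_eq0 R_char0 dP) => a.
  move=> /lshift_of_neq_last [b ->].
  by rewrite !tnth_mktuple !snoc_lshift comp_mpolyXU -tnth_nth tnth_mktuple.
rewrite -[P]comp_mpoly_id.
rewrite (comp_mpoly_mderiv_eq0 R_char0 dP (h' := [tuple tnth t a \mPo s | a < p + 1])).
  by rewrite -comp_mpolyA (g_indep Pt_rel) comp_mpoly0.
move=> a /lshift_of_neq_last [b ->].
by rewrite !tnth_mktuple snoc_lshift comp_mpolyXU -tnth_nth tnth_mktuple.
Qed.

Lemma exists_relation_mderiv_last (P : {mpoly R[p + 1]}) :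
  P != 0 -> P \mPo h = 0 ->
  exists2 Q : {mpoly R[p + 1]}, Q \mPo h = 0 & mderiv last_var Q \mPo h != 0.
Proof.
elim: {P}(msize P) {-2}P (leqnn (msize P)) => [|s IHs] P le_Ps P_neq0 P_rel.
  by move: P_neq0; rewrite -msize_poly_eq0 -leqn0 le_Ps.
have [dP_rel|] := eqVneq (mderiv last_var P \mPo h) 0; last by exists P.
have dP_neq0 := relation_mderiv_last_neq0 P_neq0 P_rel.
apply: IHs dP_neq0 dP_rel; rewrite -ltnS; apply: leq_trans le_Ps.
exact: msize_mderiv_lt.
Qed.

(* Differentiating a relation [P] of [g, X_i] gives
   [sum_b (d_b P)(h) dg_b + (d_last P)(h) e_i = 0], which expresses [e_i]
   through the rows of the Jacobian wherever [(d_last P)(h)] does not vanish. *)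
Lemma generically_delta_sub_jacobian :
  ~ mpoly_alg_indep (snoc g 'X_i) ->
  generically (fun v => (delta_mx 0 i : 'rV_n) <= jacobian_mx g v)%MS.
Proof.
move=> g_dep.
have [P0 P0_neq0 P0_rel] : exists2 P0 : {mpoly R[p + 1]}, P0 != 0 & P0 \mPo h = 0.
  apply: NNPP => no_rel; apply: g_dep => P0 P0_rel; apply/eqP/contraT => P0_neq0.
  by case: no_rel; exists P0.
have [P P_rel dP_neq0] := exists_relation_mderiv_last P0_neq0 P0_rel.
exists (mderiv last_var P \mPo h) => // v dPv.
pose c a := (mderiv a P \mPo h).@[v].
pose row_c := \row_(b < p) c (lshift 1 b).
have c_rel : row_c *m jacobian_mx g v = - c last_var *: delta_mx 0 i.
  apply/rowP => l; apply/eqP; rewrite !mxE eqxx /= mulNr -addr_eq0.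
  have := congr1 (meval v \o mderiv l) P_rel.
  rewrite /= mderiv_comp mderiv0 meval0 rmorph_sum big_split_ord big_ord1 /= => chain.
  apply/eqP; rewrite -[RHS]chain; congr (_ + _).
    by apply: eq_bigr => b _; rewrite !mxE mevalM tnth_mktuple snoc_lshift.
  by rewrite mevalM tnth_mktuple snoc_last mderivXU mevalC eq_sym.
have -> : delta_mx 0 i = (- c last_var)^-1 *: (row_c *m jacobian_mx g v).
  by rewrite c_rel scalerA mulVf ?scale1r // oppr_eq0.
by rewrite scalemx_sub // submxMl.
Qed.

End AdjoinVariable.

Lemma jacobian_row_free_of_maximal p (g : 'I_p -> {mpoly R[n]}) :
  mpoly_alg_indep g -> (forall i, ~ mpoly_alg_indep (snoc g 'X_i)) ->
  generically (fun v => row_free (jacobian_mx g v)).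
Proof.
move=> g_indep g_max; have le_pn := alg_indep_leq g_indep.
have [Q Q_neq0 QP] := generically_all (enum 'I_n)
  (fun i => generically_delta_sub_jacobian g_indep (g_max i)).
exists Q => // v /QP sub_jac.
have : row_full (jacobian_mx g v).
  by rewrite -sub1mx; apply/row_subP => i; rewrite row1 sub_jac ?mem_enum.
rewrite /row_full /row_free !eqn_leq rank_leq_row rank_leq_col /= => le_n.
exact: leq_trans le_pn le_n.
Qed.

(* Induction on [n - p]: adjoin variables [X_i] as long as the family stays
   independent; a maximal family has a generically full-rank Jacobian. *)
Theorem jacobian_criterion p (g : 'I_p -> {mpoly R[n]}) :
  mpoly_alg_indep g -> generically (fun v => row_free (jacobian_mx g v)).
Proof.
move: {2}(n - p)%N (erefl (n - p)%N) => d; elim: d p g => [|d IHd] p g d_def g_indep.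
  by apply: jacobian_row_free_of_maximal g_indep _ => i /alg_indep_leq; lia.
have [[i gi_indep]|no_i] := classic (exists i, mpoly_alg_indep (snoc g 'X_i)).
  have [|Q Q_neq0 QP] := IHd _ _ _ gi_indep; first lia.
  by exists Q => // v /QP; rewrite jacobian_snoc => /row_free_col_mxl.
by apply: jacobian_row_free_of_maximal g_indep _ => i gi; apply: no_i; exists i.
Qed.

End Jacobian.

(** * The Lie-Poisson structure *)

Section LiePoisson.
Variables (n : nat) (c : 'I_n -> 'I_n -> 'rV[CC]_n).

Lemma lie_brDl x y z : lie_br c (x + y) z = lie_br c x z + lie_br c y z.
Proof.
rewrite /lie_br -big_split; apply: eq_bigr => a _; rewrite -big_split.
by apply: eq_bigr => b _; rewrite mxE mulrDl scalerDl.
Qed.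

Lemma lie_brDr x y z : lie_br c x (y + z) = lie_br c x y + lie_br c x z.
Proof.
rewrite /lie_br -big_split; apply: eq_bigr => a _; rewrite -big_split.
by apply: eq_bigr => b _; rewrite mxE mulrDr scalerDl.
Qed.

Lemma lie_br_delta i j : lie_br c (delta_mx 0 i) (delta_mx 0 j) = c i j.
Proof.
have sum_delta (V : lmodType CC) (F : 'I_n -> V) l :
    \sum_a (delta_mx 0 l : 'rV[CC]_n) 0 a *: F a = F l.
  rewrite (bigD1 l) //= mxE !eqxx scale1r big1 ?addr0 // => a /negbTE ne_al.
  by rewrite mxE ne_al andbF scale0r.
rewrite /lie_br; transitivity
  (\sum_a (delta_mx 0 i : 'rV_n) 0 a *: \sum_b (delta_mx 0 j : 'rV_n) 0 b *: c a b).
  by apply: eq_bigr => a _; rewrite scaler_sumr; apply: eq_bigr => b _; rewrite scalerA.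
by rewrite (sum_delta _ (fun a => \sum_b (delta_mx 0 j : 'rV_n) 0 b *: c a b)) sum_delta.
Qed.

Definition poisson_mx : 'M[{mpoly CC[n]}]_n := \matrix_(i, j) lin (c i j).

Lemma meval_lin (x : 'rV[CC]_n) v : (lin x).@[v] = \sum_l x 0 l * v l.
Proof. by rewrite (raddf_sum (meval v)); apply: eq_bigr => l _; rewrite /= mevalZ mevalXU. Qed.

Lemma gram_poisson_mx gamma :
  gram c gamma = map_mx (meval (fun l => gamma l 0)) poisson_mx.
Proof. by apply/matrixP => i j; rewrite !mxE lie_br_delta meval_lin. Qed.

Lemma grad_lin (x : 'rV[CC]_n) v : grad (lin x) v = x.
Proof.
apply/rowP => j; rewrite mxE /lin (raddf_sum (mderiv j)) (raddf_sum (meval v)).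
rewrite (bigD1 j) //= big1 => [|l /negbTE ne_lj].
  by rewrite mderivZ mderivXU eqxx mevalZ mevalC mulr1 addr0.
by rewrite mderivZ mderivXU ne_lj mevalZ mevalC mulr0.
Qed.

Lemma meval_pbr F G v : (pbr c F G).@[v] =
  (grad F v *m map_mx (meval v) poisson_mx *m (grad G v)^T) 0 0.
Proof.
rewrite (raddf_sum (meval v)) !mxE; under [RHS]eq_bigr do rewrite !mxE big_distrl.
rewrite exchange_big /=; apply: eq_bigr => i _; rewrite (raddf_sum (meval v)).
by apply: eq_bigr => j _; rewrite /= !mevalM !mxE; ring.
Qed.

Lemma mxrank_coad_stab (L : 'M[CC]_n) gamma :
  (\rank (coad_stab c L gamma) + \rank (L *m gram c gamma *m L^T) = \rank L)%N.
Proof. by rewrite addnC -mulmxA mxrank_mul_ker. Qed.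

Hypothesis c_lie : is_lie_algebra c.

Lemma structure_const_skew i j : c j i = - c i j.
Proof.
have [br_alt _] := c_lie; have := br_alt (delta_mx 0 i + delta_mx 0 j).
rewrite lie_brDl !lie_brDr !lie_br_delta -!lie_br_delta !br_alt add0r addr0.
by rewrite !lie_br_delta => /eqP; rewrite addr_eq0 => /eqP ->; rewrite opprK.
Qed.

Lemma poisson_form_skew v :
  (map_mx (meval v) poisson_mx)^T = - map_mx (meval v) poisson_mx.
Proof.
apply/matrixP => i j; rewrite !mxE structure_const_skew -raddfN; congr (meval v _).
by rewrite /lin -sumrN; apply: eq_bigr => l _; rewrite mxE scaleNr.
Qed.

End LiePoisson.

Theorem proposition1p1 (n : nat) (c : 'I_n -> 'I_n -> 'rV[CC]_n)
  (L : 'M[CC]_n) (iq il : nat) (A : {pred {mpoly CC[n]}}) :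
  is_lie_algebra c -> non_abelian c ->
  lie_subalgebra c L ->
  is_index c 1%:M iq -> is_index c L il ->
  is_subalgebra A ->
  (forall F, F \in A -> l_invariant c L F) ->
  (forall F G, F \in A -> G \in A -> pbr c F G = 0) ->
  forall (k : nat) (f : 'I_k -> {mpoly CC[n]}),
    (forall i, f i \in A) -> alg_indep f ->
    (k%:R : rat) <= (n%:R - iq%:R - (\rank L)%:R + il%:R) / 2 + iq%:R
    /\ (n%:R - iq%:R - (\rank L)%:R + il%:R) / 2 + iq%:R
       = bnum n iq - bnum (\rank L) il + il%:R.
Proof.
move=> c_lie _ _ [[gq rk_gq] _] [[gl rk_gl] _] _ A_inv A_comm k f f_A f_indep.
pose B v := map_mx (meval v) (poisson_mx c).
pose CL := map_mx (@mpolyC n CC) L *m poisson_mx c *m map_mx (@mpolyC n CC) L^T.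
have LBL v : map_mx (meval v) CL = L *m B v *m L^T.
  have meval_C m1 m2 (M : 'M_(m1, m2)) : map_mx (meval v) (map_mx (@mpolyC n CC) M) = M.
    by apply/matrixP => i j; rewrite !mxE mevalC.
  by rewrite !map_mxM !meval_C.
have [v [[J_free rk_q] rk_l]] := generically_exists (pchar_num CC)
  (generically_and (generically_and (jacobian_criterion (pchar_num CC) f_indep)
     (generically_rank_ge (poisson_mx c) (fun l => gq l 0)))
     (generically_rank_ge CL (fun l => gl l 0))).
have rkB : (n <= \rank (B v) + iq)%N.
  have := mxrank_coad_stab c 1%:M gq.
  by rewrite rk_gq mul1mx trmx1 mulmx1 mxrank1 gram_poisson_mx /B; lia.
have rkL : (\rank L <= \rank (L *m B v *m L^T) + il)%N.
  by have := mxrank_coad_stab c L gl; rewrite rk_gl gram_poisson_mx -!LBL; lia.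
have JBJ : jacobian_mx f v *m B v *m (jacobian_mx f v)^T = 0.
  apply/matrixP => a b; rewrite mulmx_trmx_entry !rowK -meval_pbr.
  by rewrite A_comm ?meval0 ?mxE.
have LBJ : L *m B v *m (jacobian_mx f v)^T = 0.
  apply/matrixP => a b; rewrite mulmx_trmx_entry rowK -[row a L](grad_lin _ v).
  by rewrite -meval_pbr A_inv ?row_sub ?meval0 ?mxE.
have := isotropic_rank_bound (poisson_form_skew c_lie v) JBJ LBJ rkB rkL.
by rewrite (eqP J_free) -(ler_nat rat) !natrD /bnum => bound; split; lra.
Qed.
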